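(* Let $C_{t-1}\in\mathbb{R}^{d\times d}$ be symmetric positive semidefinite, $A_t\in\mathbb{R}^{d'\times d}$, and $Q_t\in\mathbb{R}^{d'\times d'}$ symmetric with $Q_t\succeq q_{\min}I$ for some $q_{\min}>0$. Let $P_t=A_tC_{t-1}A_t^\top+Q_t$ and let $P_{t-1}\in\mathbb{R}^{d\times d}$ be symmetric positive definite. Assume $A_t^\top A_t\preceq a_{\max}I$ and $P_{t-1}\preceq p_{\max}I$, and that $\gamma=\frac{a_{\max}p_{\max}}{q_{\min}}<1$. Then, with $M_t=P_t^{-1}$ and $M_{t-1}=P_{t-1}^{-1}$, $$A_t^\top M_tA_t\preceq\gamma M_{t-1}.$$
   Context: $\preceq$ denotes the Loewner order on symmetric matrices. This gives a sufficient condition for the contraction assumption $A_t^\top M_tA_t\preceq\gamma M_{t-1}$ with $\gamma\in[0,1)$ used in the tracking analysis of a recursive Gaussian discrepancy update whose pre-update covariance is propagated as $P_t=A_tC_{t-1}A_t^\top+Q_t$ (covariance inflation $Q_t$). *)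

From mathcomp Require Import all_boot all_order all_algebra.
Set Implicit Arguments. Unset Strict Implicit. Unset Printing Implicit Defensive.
Import Order.TTheory GRing.Theory Num.Theory.
Local Open Scope ring_scope.

Definition qform (R : numDomainType) (n : nat) (A : 'M[R]_n) (x : 'cV[R]_n) : R :=
  (x^T *m A *m x) 0 0.

Definition loewner_le (R : numDomainType) (n : nat) (A B : 'M[R]_n) : Prop :=
  forall x : 'cV[R]_n, qform A x <= qform B x.

Definition sym_mx (R : numDomainType) (n : nat) (A : 'M[R]_n) : Prop :=
  A^T = A.

Definition psd_mx (R : numDomainType) (n : nat) (A : 'M[R]_n) : Prop :=
  sym_mx A /\ loewner_le 0 A.

Definition pd_mx (R : numDomainType) (n : nat) (A : 'M[R]_n) : Prop :=
  sym_mx A /\ forall x : 'cV[R]_n, x != 0 -> 0 < qform A x.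

From mathcomp Require Import all_boot all_order all_algebra.
From mathcomp Require Import lra.
Import Order.TTheory GRing.Theory Num.Theory.
Local Open Scope ring_scope.
Set Implicit Arguments. Unset Strict Implicit.

(* With y = A x, the quadratic form of A^T P^-1 A at x is that of P^-1 at y.
   Since P = A C A^T + Q >= qmin I, one has P^-1 <= qmin^-1 I, so it is at most
   |A x|^2 / qmin <= amax |x|^2 / qmin; and Pprev <= pmax I gives
   |x|^2 <= pmax x^T Pprev^-1 x. *)

Section Dot.
Variables (R : realDomainType) (n : nat).
Implicit Types (u v w : 'cV[R]_n) (M : 'M[R]_n).

Definition dot u v : R := (u^T *m v) 0 0.

Lemma dotC u v : dot u v = dot v u.
Proof. by rewrite /dot -[u^T *m v]trmxK trmx_mul trmxK mxE. Qed.

Lemma dotDr u v w : dot u (v + w) = dot u v + dot u w.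
Proof. by rewrite /dot mulmxDr mxE. Qed.

Lemma dotDl u v w : dot (v + w) u = dot v u + dot w u.
Proof. by rewrite dotC dotDr !(dotC u). Qed.

Lemma dotZr c u v : dot u (c *: v) = c * dot u v.
Proof. by rewrite /dot -scalemxAr mxE. Qed.

Lemma dotZl c u v : dot (c *: v) u = c * dot v u.
Proof. by rewrite dotC dotZr dotC. Qed.

Lemma dotNr u v : dot u (- v) = - dot u v.
Proof. by rewrite -scaleN1r dotZr mulN1r. Qed.

Lemma dotNl u v : dot (- v) u = - dot v u.
Proof. by rewrite dotC dotNr dotC. Qed.

Lemma dot_ge0 u : 0 <= dot u u.
Proof. by rewrite /dot mxE sumr_ge0 // => i _; rewrite mxE -expr2 sqr_ge0. Qed.

Lemma dot_gt0 u : u != 0 -> 0 < dot u u.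
Proof.
move=> u_nz; rewrite lt_def dot_ge0 andbT; apply: contra u_nz.
rewrite /dot mxE psumr_eq0 => [/allP u0|i _]; last by rewrite mxE -expr2 sqr_ge0.
apply/eqP/matrixP => i j; rewrite (ord1 j) !mxE.
by have := u0 i (mem_index_enum _); rewrite /= mxE mulf_eq0 orbb => /eqP.
Qed.

Lemma qformE M u : qform M u = dot u (M *m u).
Proof. by rewrite /qform /dot mulmxA. Qed.

Lemma qform0l u : qform 0 u = 0.
Proof. by rewrite /qform mulmx0 mul0mx mxE. Qed.

Lemma qform0r M : qform M 0 = 0.
Proof. by rewrite /qform mulmx0 mxE. Qed.

Lemma qform_scalar c u : qform c%:M u = c * dot u u.
Proof. by rewrite qformE mul_scalar_mx dotZr. Qed.

Lemma qformZ c M u : qform (c *: M) u = c * qform M u.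
Proof. by rewrite /qform -scalemxAr -scalemxAl mxE. Qed.

Lemma qformD M N u : qform (M + N) u = qform M u + qform N u.
Proof. by rewrite !qformE mulmxDl dotDr. Qed.

Lemma dot_sym M u v : sym_mx M -> dot u (M *m v) = dot (M *m u) v.
Proof. by move=> M_sym; rewrite /dot trmx_mul M_sym mulmxA. Qed.

End Dot.

Lemma qform_conj (R : realDomainType) m n (B : 'M[R]_(m, n)) (M : 'M[R]_m) x :
  qform (B^T *m M *m B) x = qform M (B *m x).
Proof. by rewrite /qform trmx_mul !mulmxA. Qed.

Lemma qform_gram (R : realDomainType) m n (B : 'M[R]_(m, n)) x :
  qform (B^T *m B) x = dot (B *m x) (B *m x).
Proof. by rewrite -[B^T]mulmx1 qform_conj qform_scalar mul1r. Qed.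

Section Loewner.
Variable R : realFieldType.

Lemma loewner_le_trans n (M N L : 'M[R]_n) :
  loewner_le M N -> loewner_le N L -> loewner_le M L.
Proof. by move=> MN NL x; exact: le_trans (MN x) (NL x). Qed.

Lemma loewner_le_addl n (M N : 'M[R]_n) : loewner_le 0 N -> loewner_le M (N + M).
Proof. by move=> N_ge0 x; rewrite qformD lerDr -(qform0l x) N_ge0. Qed.

Lemma loewner_ge0_conj m n (B : 'M[R]_(m, n)) (C : 'M[R]_n) :
  loewner_le 0 C -> loewner_le 0 (B *m C *m B^T).
Proof.
move=> C_ge0 x; rewrite -[B in B *m C]trmxK qform_conj.
by rewrite qform0l -(qform0l (B^T *m x)) C_ge0.
Qed.

Lemma qform_pos_unitmx n (M : 'M[R]_n) :
  (forall v, v != 0 -> 0 < qform M v) -> M \in unitmx.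
Proof.
move=> M_pos; rewrite -row_free_unit -kermx_eq0; apply/eqP/row_matrixP => i.
set u := row i (kermx M); rewrite row0; apply/eqP; apply: contraT => u_nz.
have uM0 : u *m M = 0 by apply/sub_kermxP; exact: row_sub.
by have := M_pos u^T; rewrite trmx_eq0 u_nz /qform trmxK uM0 mul0mx mxE ltxx => /(_ isT).
Qed.

Lemma loewner_scalar_invmx_le1 n (M : 'M[R]_n) q :
  0 < q -> loewner_le q%:M M -> loewner_le (q *: invmx M) 1%:M.
Proof.
move=> q_gt0 M_ge y.
have M_unit : M \in unitmx.
  apply: qform_pos_unitmx => v v_nz; apply: lt_le_trans (M_ge v).
  by rewrite qform_scalar mulr_gt0 ?dot_gt0.
set z := invmx M *m y; have Mz : M *m z = y by rewrite mulKVmx.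
have := M_ge z; rewrite qform_scalar qformE Mz (dotC z y) => zMz.
have := dot_ge0 (y - q *: z).
rewrite !(dotDl, dotDr, dotNl, dotNr, dotZl, dotZr) (dotC z y) => sq_ge0.
rewrite qformZ qformE -/z qform_scalar mul1r.
(* 0 <= |y - q z|^2 and q |z|^2 <= z.y give q (y.z) <= |y|^2 *)
nra.
Qed.

Lemma loewner_scalar_invmx_ge1 n (M : 'M[R]_n) p :
  pd_mx M -> loewner_le M p%:M -> loewner_le 1%:M (p *: invmx M).
Proof.
move=> [M_sym M_pos] M_le x.
have [->|x_nz] := eqVneq x 0; first by rewrite !qform0r.
have M_unit := qform_pos_unitmx M_pos.
set z := invmx M *m x; have Mz : M *m z = x by rewrite mulKVmx.
have := M_pos x x_nz; have := M_le x; have := dot_gt0 x_nz.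
rewrite qform_scalar qformE => x_gt0 xMx_le xMx_gt0.
have : 0 <= qform M (p *: z - x).
  have [->|v_nz] := eqVneq (p *: z - x) 0; first by rewrite qform0r.
  exact/ltW/M_pos.
rewrite qformE mulmxDr mulmxN -scalemxAr Mz.
rewrite !(dotDl, dotDr, dotNl, dotNr, dotZl, dotZr) (dot_sym z x M_sym) Mz.
rewrite (dotC z x) => sq_ge0.
rewrite qform_scalar mul1r qformZ qformE -/z.
(* 0 <= (p z - x)^T M (p z - x) together with p > 0 gives |x|^2 <= p (x.z) *)
nra.
Qed.

End Loewner.

Theorem proposition6 (R : realFieldType) (d d' : nat)
  (C : 'M[R]_d) (A : 'M[R]_(d', d)) (Q : 'M[R]_d') (Pprev : 'M[R]_d)
  (qmin amax pmax : R) :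
  psd_mx C ->
  sym_mx Q ->
  0 < qmin ->
  loewner_le (qmin%:M) Q ->
  pd_mx Pprev ->
  loewner_le (A^T *m A) (amax%:M) ->
  loewner_le Pprev (pmax%:M) ->
  amax * pmax / qmin < 1 ->
  let P := A *m C *m A^T + Q in
  let gamma := amax * pmax / qmin in
  loewner_le (A^T *m invmx P *m A) (gamma *: invmx Pprev).
Proof.
move=> [_ C_ge0] _ qmin_gt0 Q_ge Pprev_pd AtA_le Pprev_le _ P gamma x.
have [->|x_nz] := eqVneq x 0; first by rewrite !qform0r.
have P_ge : loewner_le qmin%:M P.
  apply: loewner_le_trans Q_ge _; exact: loewner_le_addl (loewner_ge0_conj A C_ge0).
have := loewner_scalar_invmx_le1 qmin_gt0 P_ge (A *m x).
have := loewner_scalar_invmx_ge1 Pprev_pd Pprev_le x.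
have := AtA_le x; rewrite qform_gram.
rewrite qformZ qform_conj !qformZ !qform_scalar !mul1r /gamma.
move=> Ax_le x_le Pinv_le.
have amax_ge0 : 0 <= amax.
  by rewrite -(pmulr_lge0 _ (dot_gt0 x_nz)) (le_trans (dot_ge0 _) Ax_le).
rewrite mulrAC ler_pdivlMr // mulrC -mulrA.
exact: le_trans Pinv_le (le_trans Ax_le (ler_wpM2l amax_ge0 x_le)).
Qed.
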